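(* Consider $N$ users indexed by $\mathcal{U}=\{1,\dots,N\}$ with fixed channel power gains $h_1,\dots,h_N>0$, noise variance $\eta>0$, target throughputs $\theta_1,\dots,\theta_N>0$, and strategy sets $\mathcal{P}^i=[0,P_i^{max}]$ with $P_i^{max}>0$. For $\mathbf{P}\in\prod_i\mathcal{P}^i$ let $r_i(\mathbf{P})=\log_2\!\big(1+\frac{h_iP_i}{\eta+\sum_{j\neq i}h_jP_j}\big)$. Let $\mathcal{S}$ be the set of satisfaction equilibria, i.e. profiles $\mathbf{P}\in\prod_i\mathcal{P}^i$ with $r_i(\mathbf{P})\ge\theta_i$ for all $i$, and suppose $\mathcal{S}\neq\emptyset$. Then the efficient satisfaction equilibrium (a minimizer of $\sum_{i}P_i$ over $\mathcal{S}$) is unique, and it is the solution of the system $r_i(\mathbf{P})=\theta_i$ for all $i\in\mathcal{U}$.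
   Context: The system $r_i(\mathbf{P})=\theta_i$, $i\in\mathcal{U}$, is equivalent to the linear system $h_iP_i-(2^{\theta_i}-1)\sum_{j\neq i}h_jP_j=(2^{\theta_i}-1)\eta$, $i\in\mathcal{U}$. *)

From mathcomp Require Import all_boot all_order all_algebra.
From mathcomp Require Import all_classical all_reals all_analysis.
Set Implicit Arguments. Unset Strict Implicit. Unset Printing Implicit Defensive.
Import Order.TTheory GRing.Theory Num.Theory.
Local Open Scope ring_scope.

Definition log2 {R : realType} (x : R) : R := ln x / ln 2.

Definition rate {R : realType} {N : nat} (h : 'I_N -> R) (eta : R)
  (P : 'I_N -> R) (i : 'I_N) : R :=
  log2 (1 + h i * P i / (eta + \sum_(j < N | j != i) h j * P j)).

Definition in_strategy_set {R : realType} {N : nat} (Pmax P : 'I_N -> R) : Prop :=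
  forall i, 0 <= P i <= Pmax i.

Definition satisfaction_eq {R : realType} {N : nat} (h : 'I_N -> R) (eta : R)
  (theta Pmax P : 'I_N -> R) : Prop :=
  in_strategy_set Pmax P /\ forall i, theta i <= rate h eta P i.

Definition efficient_SE {R : realType} {N : nat} (h : 'I_N -> R) (eta : R)
  (theta Pmax P : 'I_N -> R) : Prop :=
  satisfaction_eq h eta theta Pmax P /\
  forall Q, satisfaction_eq h eta theta Pmax Q ->
    \sum_(i < N) P i <= \sum_(i < N) Q i.

From mathcomp Require Import all_boot all_order all_algebra.
From mathcomp Require Import all_classical all_reals all_analysis.
From mathcomp Require Import ring lra.
Set Implicit Arguments. Unset Strict Implicit. Unset Printing Implicit Defensive.
Import Order.TTheory GRing.Theory Num.Theory.
Local Open Scope ring_scope.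

(* With a_i := 1 - 2^(-theta_i), the constraint r_i(P) >= theta_i is linear:
   h_i P_i >= a_i (eta + T) where T := sum_j h_j P_j is the total received
   power.  Summing over i gives A (eta + T) <= T with A := sum_i a_i, so a
   satisfaction equilibrium forces A < 1 and T >= T0 := A eta / (1 - A).
   Hence every satisfaction equilibrium dominates, coordinatewise, the profile
   P0_i := a_i (eta + T0) / h_i, which has received power T0 and meets every
   target with equality; the same summation shows it is the only profile that
   does so. *)

Definition received_power {R : realType} {N : nat} (h P : 'I_N -> R) : R :=
  \sum_(j < N) h j * P j.

Definition rate_share {R : realType} (t : R) : R := 1 - (expR (t * ln 2))^-1.

Lemma rate_share_gt0 (R : realType) (t : R) : 0 < t -> 0 < rate_share t.
Proof.
move=> t0; have l2 : 0 < ln (2 : R) by apply: ln_gt0; lra.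
have e1 : 1 < expR (t * ln 2) by rewrite expR_gt1 mulr_gt0.
by rewrite subr_gt0 invf_lt1 // (lt_trans ltr01).
Qed.

Lemma ler_log2 (R : realType) (t y : R) :
  0 < y -> (t <= log2 y) = (expR (t * ln 2) <= y).
Proof.
move=> y0; have l2 : 0 < ln (2 : R) by apply: ln_gt0; lra.
by rewrite /log2 ler_pdivlMr // -[LHS]ler_expR lnK ?posrE.
Qed.

Lemma log2_eq (R : realType) (t y : R) :
  0 < y -> (log2 y == t) = (y == expR (t * ln 2)).
Proof.
move=> y0; have l2 : 0 < ln (2 : R) by apply: ln_gt0; lra.
rewrite /log2 -(inj_eq (mulIf (lt0r_neq0 l2))) divfK ?lt0r_neq0 //.
by rewrite -[LHS](inj_eq (@expR_inj R)) lnK ?posrE.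
Qed.

Lemma one_Ddiv_subE (R : realFieldType) (D x e : R) : 0 < D -> 0 < e ->
  1 + x / D - e = e / D * (x - (1 - e^-1) * (D + x)).
Proof. by move=> D0 e0; field; rewrite !gt_eqF. Qed.

Section RateAsPowerShare.
Variables (R : realType) (N : nat) (h : 'I_N -> R) (eta : R) (P : 'I_N -> R).
Hypotheses (eta_gt0 : 0 < eta) (power_ge0 : forall j, 0 <= h j * P j).

Let D (i : 'I_N) := eta + \sum_(j < N | j != i) h j * P j.

Let D_gt0 i : 0 < D i.
Proof. by rewrite /D ltr_wpDr //; apply: sumr_ge0 => j _. Qed.

Let eta_received i : eta + received_power h P = D i + h i * P i.
Proof. by rewrite /received_power (bigD1 i) //= addrCA addrC. Qed.

Let sinr_gt0 i : 0 < 1 + h i * P i / D i.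
Proof. by rewrite ltr_wpDr // divr_ge0 // ltW. Qed.

Lemma rate_ge_share t i :
  (t <= rate h eta P i) = (rate_share t * (eta + received_power h P) <= h i * P i).
Proof.
rewrite /rate -/(D i) ler_log2 // -subr_ge0 one_Ddiv_subE ?expR_gt0 //.
by rewrite pmulr_rge0 ?divr_gt0 ?expR_gt0 // (eta_received i) subr_ge0.
Qed.

Lemma rate_eq_share t i :
  (rate h eta P i == t) = (rate_share t * (eta + received_power h P) == h i * P i).
Proof.
rewrite /rate -/(D i) log2_eq // -subr_eq0 one_Ddiv_subE ?expR_gt0 //.
rewrite mulf_eq0 (negbTE (lt0r_neq0 (divr_gt0 (expR_gt0 _) (D_gt0 i)))) /=.
by rewrite (eta_received i) subr_eq0 eq_sym.
Qed.

End RateAsPowerShare.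

Lemma affine_le_fixpoint (R : realFieldType) (A c T : R) :
  A < 1 -> (A * (c + T) <= T) = (A * c / (1 - A) <= T).
Proof.
move=> A1; rewrite ler_pdivrMr ?subr_gt0 //.
by rewrite mulrDr mulrBr mulr1 lerBrDl addrC mulrC.
Qed.

Lemma affine_eq_fixpoint (R : realFieldType) (A c T : R) :
  A != 1 -> (A * (c + T) == T) = (T == A * c / (1 - A)).
Proof.
move=> A1; have BA : 1 - A != 0 by rewrite subr_eq0 eq_sym.
apply/eqP/eqP => [fixT|->]; last by field.
apply: (mulIf BA); rewrite divfK //; nra.
Qed.

Lemma affine_le_lt1 (R : realFieldType) (A c T : R) :
  0 < c -> 0 <= T -> A * (c + T) <= T -> A < 1.
Proof. by move=> c0 T0 HA; rewrite ltNge; apply/negP => A1; nra. Qed.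

Lemma eq_of_le_sum (R : numDomainType) (I : finType) (f g : I -> R) :
  (forall i, f i <= g i) -> \sum_i g i <= \sum_i f i -> g = f.
Proof.
move=> fg sum_le; apply/funext => i; apply/eqP; rewrite -subr_eq0; apply/eqP.
apply: (@psumr_eq0P _ _ predT (fun i => g i - f i)) => // [j _|].
  by rewrite subr_ge0.
apply/le_anti/andP; split; first by rewrite sumrB subr_le0.
by apply: sumr_ge0 => j _; rewrite subr_ge0.
Qed.

Section EfficientEquilibrium.
Variables (R : realType) (N : nat) (h : 'I_N -> R) (eta : R).
Variables (theta Pmax : 'I_N -> R).
Hypotheses (h_gt0 : forall i, 0 < h i) (eta_gt0 : 0 < eta).
Hypothesis theta_gt0 : forall i, 0 < theta i.

Let a i := rate_share (theta i).
Let A := \sum_(i < N) a i.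
Let T := received_power h.
Let SE := satisfaction_eq h eta theta Pmax.

Let a_gt0 i : 0 < a i. Proof. exact: rate_share_gt0. Qed.

Let power_ge0 Q : in_strategy_set Pmax Q -> forall j, 0 <= h j * Q j.
Proof. by move=> HQ j; case/andP: (HQ j) => Q0 _; rewrite mulr_ge0 // ltW. Qed.

Lemma SE_power_lb Q i : SE Q -> a i * (eta + T Q) <= h i * Q i.
Proof. by case=> HQ Hr; rewrite -rate_ge_share ?Hr //; exact: power_ge0. Qed.

Lemma SE_received_lb Q : SE Q -> A * (eta + T Q) <= T Q.
Proof. by move=> HQ; rewrite mulr_suml; apply: ler_sum => i _; apply: SE_power_lb. Qed.

Hypothesis SE_exists : exists P, SE P.

Lemma share_sum_lt1 : A < 1.
Proof.
case: SE_exists => P HP; apply: affine_le_lt1 eta_gt0 _ (SE_received_lb HP).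
by apply: sumr_ge0 => j _; apply: power_ge0 HP.1 j.
Qed.

Let share_sum_neq1 : A != 1. Proof. by rewrite lt_eqF ?share_sum_lt1. Qed.

Let Tstar := A * eta / (1 - A).

Let Tstar_ge0 : 0 <= Tstar.
Proof.
have A_ge0 : 0 <= A by apply: sumr_ge0 => i _; apply: ltW.
by rewrite divr_ge0 ?mulr_ge0 ?subr_ge0 ?(ltW share_sum_lt1) ?(ltW eta_gt0).
Qed.

Definition efficient_profile i := a i * (eta + Tstar) / h i.

Let Pstar := efficient_profile.

Let h_Pstar i : h i * Pstar i = a i * (eta + Tstar).
Proof. by rewrite mulrC divfK ?gt_eqF. Qed.

Lemma received_efficient_profile : T Pstar = Tstar.
Proof.
rewrite /T /received_power (eq_bigr _ (fun i _ => h_Pstar i)) -mulr_suml.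
by apply/eqP; rewrite affine_eq_fixpoint.
Qed.

Lemma efficient_profile_le_SE Q i : SE Q -> Pstar i <= Q i.
Proof.
move=> HQ; rewrite -(ler_pM2l (h_gt0 i)) h_Pstar (le_trans _ (SE_power_lb i HQ)) //.
rewrite ler_pM2l // lerD2l -affine_le_fixpoint ?share_sum_lt1 //.
exact: SE_received_lb.
Qed.

Lemma efficient_profile_strategy : in_strategy_set Pmax Pstar.
Proof.
move=> i; case: SE_exists => P HP; apply/andP; split.
  rewrite -(pmulr_rge0 _ (h_gt0 i)) h_Pstar.
  by rewrite mulr_ge0 ?(ltW (a_gt0 i)) // addr_ge0 ?(ltW eta_gt0).
by apply: le_trans (efficient_profile_le_SE i HP) _; case/andP: (HP.1 i).
Qed.

Lemma rate_efficient_profile i : rate h eta Pstar i = theta i.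
Proof.
apply/eqP; rewrite rate_eq_share //; last exact: power_ge0 efficient_profile_strategy.
by rewrite -/(T Pstar) received_efficient_profile h_Pstar.
Qed.

Lemma efficient_profile_SE : SE Pstar.
Proof. by split=> [|i]; [exact: efficient_profile_strategy|rewrite rate_efficient_profile]. Qed.

Lemma rate_eq_efficient_profile Q : in_strategy_set Pmax Q ->
  (forall i, rate h eta Q i = theta i) -> Q = Pstar.
Proof.
move=> HQ HQr.
have hQ i : a i * (eta + T Q) = h i * Q i.
  by apply/eqP; rewrite -rate_eq_share ?HQr //; exact: power_ge0.
have TQ : T Q = Tstar.
  apply/eqP; rewrite -affine_eq_fixpoint //.
  by rewrite mulr_suml; apply/eqP/eq_bigr => i _.
apply/funext => i; apply: (mulfI (lt0r_neq0 (h_gt0 i))).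
by rewrite -hQ h_Pstar TQ.
Qed.

End EfficientEquilibrium.

Theorem proposition2 (R : realType) (N : nat) (h : 'I_N -> R) (eta : R)
  (theta Pmax : 'I_N -> R)
  (hpos : forall i, 0 < h i) (etapos : 0 < eta)
  (thetapos : forall i, 0 < theta i) (Pmaxpos : forall i, 0 < Pmax i)
  (Sne : exists P, satisfaction_eq h eta theta Pmax P) :
  exists Pstar : 'I_N -> R,
    efficient_SE h eta theta Pmax Pstar /\
    (forall Q, efficient_SE h eta theta Pmax Q -> Q = Pstar) /\
    (forall i, rate h eta Pstar i = theta i) /\
    (forall Q, in_strategy_set Pmax Q ->
       (forall i, rate h eta Q i = theta i) -> Q = Pstar).
Proof.
have Pstar_SE := efficient_profile_SE hpos etapos thetapos Sne.
have Pstar_le := efficient_profile_le_SE hpos etapos thetapos Sne.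
exists (efficient_profile h eta theta); split; [split|split; [|split]].
- exact: Pstar_SE.
- by move=> Q HQ; apply: ler_sum => i _; exact: Pstar_le Q i HQ.
- move=> Q [HQ HQmin]; apply: eq_of_le_sum (HQmin _ Pstar_SE) => i.
  exact: Pstar_le Q i HQ.
- exact: rate_efficient_profile hpos etapos thetapos Sne.
- exact: rate_eq_efficient_profile hpos etapos Sne.
Qed.
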